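(* For any random vector $\vec{x}=(\vec{x}(0),\dots,\vec{x}(k-1))$ of real random variables with finite expectations (not necessarily independent), $$\mathbb{E}\Big[\max_{j<k}\vec{x}(j)\Big]-\max_{j<k}\mathbb{E}[\vec{x}(j)]\le\frac12\sum_{j<k}\sqrt{\mathrm{Var}(\vec{x}(j))}.$$ *)

From HB Require Import structures.
From mathcomp Require Import all_boot all_order all_algebra.
From mathcomp Require Import all_classical all_reals all_analysis.
Set Implicit Arguments. Unset Strict Implicit. Unset Printing Implicit Defensive.

From HB Require Import structures.
From mathcomp Require Import all_boot all_order all_algebra.
From mathcomp Require Import all_classical all_reals all_analysis.
From mathcomp Require Import measurable_realfun lra.
Set Implicit Arguments.
Unset Strict Implicit.
Unset Printing Implicit Defensive.
Import Order.TTheory GRing.Theory Num.Theory.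
Local Open Scope ring_scope.
Local Open Scope ereal_scope.

(* Let m_j = E x(j) and M = max_j m_j.  Pointwise
   max_j x(j) <= M + sum_j (x(j) - m_j)^+, so that
   E max_j x(j) - M <= sum_j E (x(j) - m_j)^+.  A centred integrable Y has
   E Y^+ = E Y^- = E|Y| / 2, and on a probability space Hoelder's inequality
   against the constant 1 gives E|Y| <= ||Y||_2 = sqrt (Var Y). *)

Lemma bigmaxe_le_add_sum_pos (R : realType) (I : finType) (x m : I -> R) :
  \big[maxe/-oo]_i (x i)%:E
    <= \big[maxe/-oo]_i (m i)%:E + \sum_i maxe (x i - m i)%:E 0.
Proof.
apply: bigmax_le => [|i _]; first exact: leNye.
have -> : x i = (m i + (x i - m i))%R by rewrite addrC subrK.
rewrite EFinD; apply: leeD.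
  exact: (le_bigmax _ (fun j => (m j)%:E) i).
rewrite (bigD1 i) //=; apply: le_trans (leeDl _ _).
  by rewrite le_max lexx.
by apply: sume_ge0 => j _; rewrite le_max lexx orbT.
Qed.

Lemma bigmaxe_EFin_fin_num (R : realType) (I : finType) (i0 : I) (x : I -> R) :
  \big[maxe/-oo]_i (x i)%:E \is a fin_num.
Proof.
by have [i _ ->] := @eq_bigmax _ _ _ -oo i0 xpredT (fun i => (x i)%:E) isT
  (fun i _ => leNye _).
Qed.

Section integral_lemmas.
Context d (T : measurableType d) (R : realType).
Variable mu : {measure set T -> \bar R}.
Variables (D : set T) (mD : measurable D).

Lemma measurable_bigmaxe (I : Type) (s : seq I) (f : I -> T -> \bar R) :
  (forall i, measurable_fun D (f i)) ->
  measurable_fun D (fun x => \big[maxe/-oo]_(i <- s) f i x).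
Proof.
move=> mf; elim: s => [|i s ih].
  by under eq_fun do rewrite big_nil; exact: measurable_cst.
by under eq_fun do rewrite big_cons; exact: measurable_maxe.
Qed.

Lemma integrable_bigmaxe (I : finType) (i0 : I) (f : I -> T -> \bar R) :
  (forall i, mu.-integrable D (f i)) ->
  mu.-integrable D (fun x => \big[maxe/-oo]_i f i x).
Proof.
move=> intf.
apply: (le_integrable mD (g := fun x => \sum_i `|f i x|)).
- by apply: measurable_bigmaxe => i; exact: measurable_int (intf i).
- move=> x _.
  have [i _ ->] := @eq_bigmax _ _ _ -oo i0 xpredT (f^~ x) isT
    (fun i _ => leNye _).
  rewrite [leRHS]gee0_abs; last exact: sume_ge0.
  by rewrite (bigD1 i) //=; apply: leeDl; exact: sume_ge0.
- by apply: integrable_sum => // i _; exact: integrable_abse.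
Qed.

Lemma integral_funepos_centered (f : T -> \bar R) :
  mu.-integrable D f -> \int[mu]_(x in D) f x = 0 ->
  \int[mu]_(x in D) f^\+ x = 2^-1%:E * \int[mu]_(x in D) `|f x|.
Proof.
move=> intf f0.
have pos_fin : \int[mu]_(x in D) f^\+ x \is a fin_num.
  by rewrite ge0_fin_numE ?integral_funepos_lt_pinfty // integral_ge0.
have neg_fin : \int[mu]_(x in D) f^\- x \is a fin_num.
  by rewrite ge0_fin_numE ?integral_funeneg_lt_pinfty // integral_ge0.
have -> : \int[mu]_(x in D) `|f x|
          = \int[mu]_(x in D) f^\+ x + \int[mu]_(x in D) f^\- x.
  rewrite -ge0_integralD //.
  - by apply: eq_integral => x _; rewrite -[_ + _]/((_ \+ _) x) -fune_abse.
  - exact: measurable_funepos (measurable_int _ intf).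
  - exact: measurable_funeneg (measurable_int _ intf).
move: f0; rewrite integralE -(fineK pos_fin) -(fineK neg_fin) -EFinB.
by move=> -[/subr0_eq ->]; rewrite -EFinD -EFinM; congr _%:E; lra.
Qed.
End integral_lemmas.

Section centered.
Context d (T : measurableType d) (R : realType) (P : probability T R).

Lemma Lnorm1_le_Lnorm2 (f : T -> R) : measurable_fun setT f ->
  'N[P]_1[EFin \o f] <= 'N[P]_2%:E[EFin \o f].
Proof.
move=> mf.
have half : (2^-1 + 2^-1 = 1 :> R)%R by rewrite [in RHS](splitr 1) mul1r.
have := hoelder P mf (measurable_cst (1%R : R)) (ltr0Sn R 1) (ltr0Sn R 1) half.
have -> : 'N[P]_2%:E[EFin \o cst 1%R] = 1.
  rewrite -[EFin \o _]/(cst 1) (Lnorm_cst1 P 2).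
  by rewrite -[RHS](poweR1r 2^-1); congr (_ `^ _); exact: probability_setT.
by rewrite mule1; under eq_Lnorm do rewrite /= mulr1.
Qed.

Lemma expectation_centered (X : T -> R) : X \in Lfun P 1 ->
  'E_P[X \- cst (fine 'E_P[X])] = 0.
Proof.
move=> X1; rewrite expectationB ?Lfun_cst // expectation_cst.
by rewrite fineK ?expectation_fin_num // subee ?expectation_fin_num.
Qed.

Lemma sqrte_variance (X : T -> R) :
  sqrte 'V_P[X] = 'N[P]_2%:E[EFin \o (X \- cst (fine 'E_P[X]))%R].
Proof.
rewrite unlock /= poweR12_sqrt; last first.
  by apply: integral_ge0 => x _; rewrite lee_fin powR_ge0.
congr sqrte; rewrite /variance unlock /= unlock.
apply: eq_integral => x _ /=.
by rewrite powR_mulrn // -normrX ger0_norm ?sqr_ge0 // expr2.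
Qed.

Lemma integral_centered_funepos_le (X : T -> R) : X \in Lfun P 1 ->
  \int[P]_w ((EFin \o (X \- cst (fine 'E_P[X]))%R)^\+ w)
    <= 2^-1%:E * sqrte 'V_P[X].
Proof.
move=> X1; set Y := (X \- cst _)%R.
have Y1 : Y \in Lfun P 1 by rewrite rpredB // Lfun_cst.
have intY : P.-integrable setT (EFin \o Y) by apply/Lfun1_integrable.
rewrite integral_funepos_centered //; last first.
  by move: (expectation_centered X1); rewrite {1}unlock.
have mY : measurable_fun setT Y.
  by apply/measurable_EFinP; exact: measurable_int intY.
apply: lee_wpmul2l; first by rewrite lee_fin invr_ge0.
by have := Lnorm1_le_Lnorm2 mY; rewrite Lnorm1 -sqrte_variance.
Qed.

Lemma integral_bigmaxe_le (I : finType) (i0 : I) (X : I -> T -> R) :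
    (forall i, X i \in Lfun P 1) ->
  \int[P]_w \big[maxe/-oo]_i (X i w)%:E
    <= \big[maxe/-oo]_i 'E_P[X i]
       + \sum_i \int[P]_w ((EFin \o (X i \- cst (fine 'E_P[X i]))%R)^\+ w).
Proof.
move=> X1; set m := fun i => fine 'E_P[X i].
have intX i : P.-integrable setT (EFin \o X i) by apply/Lfun1_integrable.
have Em i : 'E_P[X i] = (m i)%:E by rewrite fineK ?expectation_fin_num.
under eq_bigr do rewrite Em.
set M := \big[maxe/-oo]_i _.
have M_fin : M \is a fin_num by exact: bigmaxe_EFin_fin_num.
set pos := fun i => (EFin \o (X i \- cst (m i)))%R^\+.
have intpos i : P.-integrable setT (pos i).
  apply: integrable_funepos => //; apply/Lfun1_integrable.
  by rewrite rpredB ?Lfun_cst.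
have intsum : P.-integrable setT (fun w => \sum_i pos i w).
  by apply: integrable_sum => // i _.
have intM : P.-integrable setT (cst M).
  by rewrite -(fineK M_fin); exact: finite_measure_integrable_cst.
apply: (@le_trans _ _ (\int[P]_w (M + \sum_i pos i w))).
  apply: le_integral => //.
  - exact: integrable_bigmaxe.
  - exact: (integrableD _ intM intsum).
  - move=> w _; under [in leRHS]eq_bigr do rewrite /pos funeposE.
    exact: bigmaxe_le_add_sum_pos.
rewrite integralD // integral_cst // integral_sum //.
rewrite [X in _ * X](_ : _ = 1) ?mule1 //; exact: probability_setT.
Qed.
End centered.

Theorem lemma3p5 (d : measure_display) (T : measurableType d) (R : realType)
  (P : probability T R) (k : nat) (hk : (0 < k)%N)
  (X : 'I_k -> {RV P >-> R}) (hX : forall j, (X j : T -> R) \in Lfun P 1) :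
  'E_P[fun w => fine (\big[maxe/-oo]_(j < k) ((X j w)%:E))]
    - \big[maxe/-oo]_(j < k) 'E_P[X j]
  <= (2^-1)%:E * \sum_(j < k) sqrte 'V_P[X j].
Proof.
set j0 := Ordinal hk.
have -> : 'E_P[fun w => fine (\big[maxe/-oo]_(j < k) (X j w)%:E)]
          = \int[P]_w \big[maxe/-oo]_(j < k) (X j w)%:E.
  rewrite unlock; apply: eq_integral => w _.
  by rewrite fineK // (bigmaxe_EFin_fin_num j0).
have maxE_fin : \big[maxe/-oo]_(j < k) 'E_P[X j] \is a fin_num.
  under eq_bigr do rewrite -[ 'E_P[_] ]fineK ?expectation_fin_num //.
  exact: bigmaxe_EFin_fin_num j0 _.
rewrite leeBlDl // ge0_sume_distrr; last by move=> j _; exact: sqrte_ge0.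
apply: le_trans (integral_bigmaxe_le j0 hX) _.
rewrite leeD2l //; apply: lee_sum => j _; exact: integral_centered_funepos_le.
Qed.
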